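(* Let $(A,\cdot)$ be a commutative associative algebra and $(P,Q)$ an admissible pair on it. Define $x\star y=x\cdot Q(y)$ for $x,y\in A$. Then $(A,\star)$ is a Novikov algebra.
   Context: All vector spaces are finite-dimensional over a field $\mathbb F$ of characteristic $0$. An admissible pair on a commutative associative algebra $(A,\cdot)$ is a pair of linear maps $P,Q:A\to A$ with $Q(x\cdot y)=Q(x)\cdot y+x\cdot P(y)$ for all $x,y\in A$. A Novikov algebra is $(A,\star)$ with $(x\star y)\star z-x\star(y\star z)=(y\star x)\star z-y\star(x\star z)$ and $(x\star y)\star z=(x\star z)\star y$ for all $x,y,z\in A$. *)

From HB Require Import structures.
From mathcomp Require Import all_boot all_order all_algebra.
Set Implicit Arguments. Unset Strict Implicit. Unset Printing Implicit Defensive.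
Import GRing.Theory.
Local Open Scope ring_scope.

Definition bilinear_op (F : fieldType) (A : lmodType F) (mul : A -> A -> A) :=
  (forall a x y z, mul (a *: x + y) z = a *: mul x z + mul y z) /\
  (forall a x y z, mul x (a *: y + z) = a *: mul x y + mul x z).

Definition is_com_assoc_algebra (F : fieldType) (A : lmodType F)
    (mul : A -> A -> A) :=
  [/\ bilinear_op mul,
      (forall x y, mul x y = mul y x) &
      (forall x y z, mul (mul x y) z = mul x (mul y z))].

Definition admissible_pair (F : fieldType) (A : lmodType F)
    (mul : A -> A -> A) (P Q : A -> A) :=
  forall x y, Q (mul x y) = mul (Q x) y + mul x (P y).

Definition novikov_identities (F : fieldType) (A : lmodType F)
    (star : A -> A -> A) :=
  (forall x y z, star (star x y) z - star x (star y z)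
                 = star (star y x) z - star y (star x z)) /\
  (forall x y z, star (star x y) z = star (star x z) y).

Definition is_novikov_algebra (F : fieldType) (A : lmodType F)
    (star : A -> A -> A) :=
  bilinear_op star /\ novikov_identities star.

From HB Require Import structures.
From mathcomp Require Import all_boot all_order all_algebra.
Import GRing.Theory.
Local Open Scope ring_scope.

(* Right commutativity of x * Q(y) only uses that the multiplication is
   commutative and associative.  For left symmetry, admissibility gives
   Q(y Q(z)) = Q(y) Q(z) + y P(Q(z)), so the associator of the new product is
   (x, y, z) = - x y P(Q(z)), which is symmetric in x and y.  Neither step
   needs the characteristic hypothesis. *)

Section ComAssocMul.

Context {F : fieldType} {A : lmodType F} {mul : A -> A -> A}.

Lemma bilinear_op_mulDr : bilinear_op mul ->
  forall x y z, mul x (y + z) = mul x y + mul x z.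
Proof.
rewrite /bilinear_op => -[_ mulr_lin] x y z.
by rewrite -[y]scale1r mulr_lin !scale1r.
Qed.

Lemma bilinear_op_comp_linear (Q : {linear A -> A}) : bilinear_op mul ->
  bilinear_op (fun x y => mul x (Q y)).
Proof.
rewrite /bilinear_op => -[mull_lin mulr_lin].
split=> a x y z; first exact: mull_lin.
by rewrite linearD linearZ /= mulr_lin.
Qed.

Hypotheses (mulC : forall x y, mul x y = mul y x)
           (mulA : forall x y z, mul (mul x y) z = mul x (mul y z)).

Lemma com_assoc_mulAC x y z : mul (mul x y) z = mul (mul x z) y.
Proof. by rewrite !mulA (mulC y). Qed.

Lemma admissible_associator (P Q : A -> A) :
    bilinear_op mul -> admissible_pair mul P Q ->
  forall x y z, mul (mul x (Q y)) (Q z) - mul x (Q (mul y (Q z)))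
                = - mul (mul x y) (P (Q z)).
Proof.
move=> mul_bilin QPadm x y z.
by rewrite QPadm bilinear_op_mulDr // opprD !mulA addrA subrr add0r.
Qed.

End ComAssocMul.

Theorem proposition3p26 (F : fieldType) (A : vectType F)
    (mul : A -> A -> A) (P Q : {linear A -> A}) :
  [pchar F] =i pred0 ->
  is_com_assoc_algebra mul ->
  admissible_pair mul P Q ->
  is_novikov_algebra (fun x y => mul x (Q y)).
Proof.
move=> _ [mul_bilin mulC mulA] QPadm.
split; first exact: bilinear_op_comp_linear.
split=> x y z.
- by rewrite !(admissible_associator mulA P Q mul_bilin QPadm) (mulC y).
- exact: com_assoc_mulAC.
Qed.
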